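(* Let $\varepsilon>0$ and let $s:\Delta_{L-1}\to2^{[L]}$ be a selection rule that is $\varepsilon$-compatible, permutation invariant, and contains the argmax. Then for every $w\in\Delta_{L-1}$ and $j\in[L]$, if $s(w)=\{j\}$ then $\mathrm{argmax}^\varepsilon(w)=\{j\}$.
   Context: $\Delta_{L-1}=\{w\in\mathbb{R}^L:w_i\ge0,\sum_iw_i=1\}$, $\|\cdot\|$ Euclidean norm. $s$ is $\varepsilon$-compatible if $\|v-w\|<\varepsilon$ implies $s(v)\cap s(w)\ne\varnothing$ for all $v,w\in\Delta_{L-1}$. $s$ is permutation invariant if for all $w\in\Delta_{L-1}$ and permutations $\sigma$ of $[L]$, with $v=(w_{\sigma(1)},\dots,w_{\sigma(L)})$, $j\in s(v)\iff\sigma(j)\in s(w)$. $s$ contains the argmax if $\{j:w_j=\max_\ell w_\ell\}\subseteq s(w)$ for all $w$. For $j\in[L]$, $R_j^\varepsilon=\{w\in\mathbb{R}^L: w_j\ge\max_{\ell\neq j}w_\ell+\varepsilon/\sqrt2\}$, and $\mathrm{argmax}^\varepsilon(w)=\{j\in[L]:\mathrm{dist}(w,R_j^\varepsilon)<\varepsilon\}$ with $\mathrm{dist}(w,R)=\inf_{u\in R}\|w-u\|$. *)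

From HB Require Import structures.
From mathcomp Require Import all_boot all_order all_algebra all_fingroup.
From mathcomp Require Import boolp classical_sets reals.
Set Implicit Arguments. Unset Strict Implicit. Unset Printing Implicit Defensive.
Import Order.TTheory GRing.Theory Num.Theory.
Local Open Scope ring_scope.
Local Open Scope classical_set_scope.

(* Points of R^L are functions 'I_L -> R ; [L] is represented by 'I_L. *)

Definition enorm {R : realType} {L : nat} (v : 'I_L -> R) : R :=
  Num.sqrt (\sum_(i < L) v i ^+ 2).

Definition simplex {R : realType} {L : nat} (w : 'I_L -> R) : Prop :=
  (forall i, 0 <= w i) /\ \sum_(i < L) w i = 1.

Definition eps_compatible {R : realType} {L : nat} (eps : R)
  (s : ('I_L -> R) -> {set 'I_L}) : Prop :=
  forall v w, simplex v -> simplex w ->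
    enorm (fun i => v i - w i) < eps -> (s v :&: s w != finset.set0).

Definition perm_invariant {R : realType} {L : nat}
  (s : ('I_L -> R) -> {set 'I_L}) : Prop :=
  forall (w : 'I_L -> R) (sigma : {perm 'I_L}), simplex w ->
    forall j, (j \in s (fun i => w (sigma i))) = (sigma j \in s w).

Definition contains_argmax {R : realType} {L : nat}
  (s : ('I_L -> R) -> {set 'I_L}) : Prop :=
  forall w, simplex w ->
    forall j, (forall l, w l <= w j) -> j \in s w.

Definition Rregion {R : realType} {L : nat} (eps : R) (j : 'I_L) : set ('I_L -> R) :=
  [set w | forall l, l != j -> w l + eps / Num.sqrt 2 <= w j].

Definition dist {R : realType} {L : nat} (w : 'I_L -> R) (A : set ('I_L -> R)) : R :=
  inf [set enorm (fun i => w i - u i) | u in A].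

Definition argmax_eps {R : realType} {L : nat} (eps : R) (w : 'I_L -> R) : {set 'I_L} :=
  [set j | `[< dist w (Rregion eps j) < eps >]].

From HB Require Import structures.
From mathcomp Require Import all_boot all_order all_algebra all_fingroup.
From mathcomp Require Import reals.
From mathcomp Require Import boolp classical_sets.
From mathcomp Require Import lra.

Set Implicit Arguments.
Unset Strict Implicit.
Unset Printing Implicit Defensive.
Import Order.TTheory GRing.Theory Num.Theory.
Local Open Scope ring_scope.

(* If [s w = {j}], then [j] is the maximiser of [w] (every maximiser is
   selected).  Swapping coordinates [j] and [k] gives a point [v] with
   [s v = {k}] at distance [sqrt 2 (w_j - w_k)] from [w]; compatibility
   forces this distance to be at least [eps], i.e. [w] lies in [R_j^eps].
   Hence [dist(w, R_j^eps) = 0], while for [k <> j] any [u] in [R_k^eps]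
   satisfies [(w_j - u_j) + (u_k - w_k) >= sqrt 2 eps], which by
   Cauchy-Schwarz puts [u] at distance at least [eps] from [w]. *)

Section EuclideanNorm.
Variables (R : realType) (L : nat).
Implicit Types (v w : 'I_L -> R).

Lemma enorm0 : enorm (fun _ : 'I_L => 0 : R) = 0.
Proof. by rewrite /enorm big1 ?sqrtr0 // => i _; rewrite expr0n. Qed.

Lemma enorm_ge0 v : 0 <= enorm v.
Proof. exact: sqrtr_ge0. Qed.

Lemma enorm_ge_pair v (j k : 'I_L) (e : R) : k != j -> 0 <= e ->
  e ^+ 2 <= v j ^+ 2 + v k ^+ 2 -> e <= enorm v.
Proof.
move=> kj e0 le_e.
rewrite -[e in e <= _](ger0_norm e0) -sqrtr_sqr ler_sqrt; last first.
  by apply: sumr_ge0 => i _; exact: sqr_ge0.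
apply: (le_trans le_e); rewrite (bigD1 j) //= (bigD1 k) /=; last by rewrite kj.
by rewrite addrA lerDl; apply: sumr_ge0 => i _; exact: sqr_ge0.
Qed.

Lemma enorm_sub_tperm w (j k : 'I_L) : k != j ->
  enorm (fun i => w (tperm j k i) - w i) = Num.sqrt 2 * `|w j - w k|.
Proof.
move=> kj; rewrite /enorm (bigD1 j) //= (bigD1 k) /=; last by rewrite kj.
rewrite big1 => [|i /andP [ik ij]]; last by rewrite tpermD 1?eq_sym ?subrr ?expr0n.
rewrite tpermL tpermR addr0 -[w k - w j]opprB sqrrN -mulr2n.
by rewrite -[_ *+ 2]mulr_natl sqrtrM ?ler0n // sqrtr_sqr.
Qed.

End EuclideanNorm.

Lemma simplex_perm (R : realType) (L : nat) (w : 'I_L -> R) (sigma : {perm 'I_L}) :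
  simplex w -> simplex (fun i => w (sigma i)).
Proof.
case=> w_ge0 w_sum1; split=> [i|]; first exact: w_ge0.
by rewrite -w_sum1 [RHS](reindex_inj (@perm_inj _ sigma)).
Qed.

Lemma sqr_le_sum_sqr (R : realFieldType) (a b c : R) : 0 <= c ->
  2 * c <= a + b -> 2 * c ^+ 2 <= a ^+ 2 + b ^+ 2.
Proof.
move=> c0 cab; have := sqr_ge0 (a - b).
have : (2 * c) ^+ 2 <= (a + b) ^+ 2 by rewrite ler_pXn2r ?nnegrE ?mulr_ge0 //; lra.
by rewrite !expr2; lra.
Qed.

Lemma sqr_div_sqrt2 (R : rcfType) (x : R) : 2 * (x / Num.sqrt 2) ^+ 2 = x ^+ 2.
Proof.
rewrite expr_div_n sqr_sqrtr ?ler0n // mulrC -mulrA mulVf ?mulr1 //.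
by rewrite pnatr_eq0.
Qed.

Section Distance.
Variables (R : realType) (L : nat).
Implicit Types (w u : 'I_L -> R) (A : set ('I_L -> R)).

Lemma dist_le w A u : A u -> dist w A <= enorm (fun i => w i - u i).
Proof.
move=> Au; apply: ge_inf; last by exists u.
by exists 0 => _ [v _ <-]; exact: enorm_ge0.
Qed.

Lemma dist_ge w A e : (A !=set0)%classic ->
  (forall u, A u -> e <= enorm (fun i => w i - u i)) -> e <= dist w A.
Proof.
move=> [u Au] le_e; apply: lb_le_inf => [|_ [v Av <-]]; last exact: le_e.
by exists (enorm (fun i => w i - u i)), u.
Qed.

Lemma Rregion_neq0 (eps : R) (k : 'I_L) : (Rregion eps k !=set0)%classic.
Proof.
exists (fun i => if i == k then eps / Num.sqrt 2 else 0).
by move=> l lk /=; rewrite eqxx (negbTE lk) add0r.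
Qed.

Lemma Rregion_far w (eps : R) (j k : 'I_L) u : 0 <= eps -> k != j ->
  Rregion eps j w -> Rregion eps k u -> eps <= enorm (fun i => w i - u i).
Proof.
move=> eps0 kj /(_ k kj) w_gap /(_ j) u_gap.
have jk : j != k by rewrite eq_sym.
have c0 : 0 <= eps / Num.sqrt 2 by rewrite divr_ge0 ?sqrtr_ge0.
apply: (enorm_ge_pair kj eps0); rewrite -sqr_div_sqrt2 -[(w k - u k) ^+ 2]sqrrN.
by apply: sqr_le_sum_sqr => //; move: (u_gap jk); lra.
Qed.

End Distance.

Section SingletonSelection.
Variables (R : realType) (L : nat) (eps : R) (s : ('I_L -> R) -> {set 'I_L}).
Hypotheses (s_compatible : eps_compatible eps s) (s_perm : perm_invariant s)
  (s_argmax : contains_argmax s).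
Variables (w : 'I_L -> R) (j : 'I_L).
Hypotheses (w_simplex : simplex w) (s_w : s w = [set j]).

Lemma singleton_selection_max l : w l <= w j.
Proof.
have [m _ m_max] := @Order.TotalTheory.arg_maxP _ _ 'I_L j xpredT w erefl.
have : m \in s w by apply: s_argmax => // i; exact: m_max.
by rewrite s_w inE => /eqP <-; exact: m_max.
Qed.

Lemma singleton_selection_tperm k :
  s (fun i => w (tperm j k i)) = [set k].
Proof.
apply/setP => i; rewrite s_perm // s_w !inE.
by rewrite (canF_eq (tpermK j k)) tpermL.
Qed.

Lemma singleton_selection_Rregion : Rregion eps j w.
Proof.
move=> k kj /=; case: leP => // gap_lt.
have v_simplex := simplex_perm (tperm j k) w_simplex.
have near : enorm (fun i => w (tperm j k i) - w i) < eps.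
  rewrite enorm_sub_tperm // ger0_norm ?subr_ge0 ?singleton_selection_max //.
  by rewrite mulrC -ltr_pdivlMr ?sqrtr_gt0 ?ltr0n // ltrBlDl.
move: (s_compatible v_simplex w_simplex near).
rewrite singleton_selection_tperm s_w => /eqP meet_neq0; exfalso.
apply: meet_neq0; apply/setP => i; rewrite !inE.
by case: eqP => // ->; rewrite (negbTE kj).
Qed.

End SingletonSelection.

Theorem proposition4 (R : realType) (L : nat) (eps : R)
  (s : ('I_L -> R) -> {set 'I_L}) :
  0 < eps -> eps_compatible eps s -> perm_invariant s -> contains_argmax s ->
  forall (w : 'I_L -> R) (j : 'I_L), simplex w ->
    s w = [set j] -> argmax_eps eps w = [set j].
Proof.
move=> eps_gt0 s_compatible s_perm s_argmax w j w_simplex s_w.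
have w_Rj := singleton_selection_Rregion s_compatible s_perm s_argmax w_simplex s_w.
apply/setP => k; rewrite !inE.
have [->|kj] := eqVneq k j.
  apply/asboolP/(le_lt_trans (dist_le w w_Rj)).
  by under eq_fun do rewrite subrr; rewrite enorm0.
apply/negbTE/asboolPn/negP; rewrite -leNgt; apply: dist_ge; first exact: Rregion_neq0.
by move=> u; apply: Rregion_far w_Rj; rewrite ?ltW.
Qed.
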